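(* Let $k$ be a field of characteristic not $2$ or $3$, let $\mathcal{A}\in k^{n+1}\otimes\operatorname{Sym}_2k^{m+1}$ and let $\mathfrak{C}\subseteq\mathbb{P}^m$ be its Cayley variety. If $\ell$ is a secant line of $\mathfrak{C}$ not contained in $\mathfrak{C}$, then $\psi(\ell)$ is a single point of $\widehat{\mathbb{P}}^n$. Conversely, if $\ell$ is a line such that $\psi(\ell)$ is a single point, then $\ell$ is a secant line of $\mathfrak{C}$.
   Context: $\mathcal{A}$ is an $(n+1)$-tuple $(A_0,\dots,A_n)$ of symmetric $(m+1)\times(m+1)$ matrices; $\mathfrak{C}=Z(\mathbf{y}^TA_0\mathbf{y},\dots,\mathbf{y}^TA_n\mathbf{y})$; $\psi:\mathbb{P}^m\dashrightarrow\widehat{\mathbb{P}}^n$, $y\mapsto(y^TA_0y:\dots:y^TA_ny)$, and $\psi(\ell)$ means the image of the points of $\ell$ where $\psi$ is defined. A secant line of $\mathfrak{C}$ is a line meeting $\mathfrak{C}$ in a subscheme of length at least $2$, i.e. either through two distinct points of $\mathfrak{C}$ or tangent to $\mathfrak{C}$ at a point. *)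

From HB Require Import structures.
From mathcomp Require Import all_boot all_order all_algebra.
Set Implicit Arguments. Unset Strict Implicit. Unset Printing Implicit Defensive.
Import GRing.Theory.
Local Open Scope ring_scope.

(* Geometric points: everything is over an algebraically closed field K.
   Points of P^m are nonzero row vectors of K^(m+1) up to scaling. *)
Section Cayley.
Variables (K : fieldType) (m n : nat).
Implicit Types (A : 'M[K]_m.+1) (y z p q : 'rV[K]_m.+1).

Definition qf A y : K := (y *m A *m y^T) 0 0.
Definition bf A y z : K := (y *m A *m z^T) 0 0.

Definition in_cayley (As : 'I_n.+1 -> 'M[K]_m.+1) y :=
  y != 0 /\ forall i, qf (As i) y = 0.

Definition proj_eq (N : nat) (y z : 'rV[K]_N) := exists c : K, c != 0 /\ z = c *: y.

Definition is_line p q := row_free (col_mx p q).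
Definition on_line p q y :=
  exists s t : K, (s != 0 \/ t != 0) /\ y = s *: p + t *: q.

Definition psi_defined (As : 'I_n.+1 -> 'M[K]_m.+1) y := exists i, qf (As i) y != 0.
Definition psi_vec (As : 'I_n.+1 -> 'M[K]_m.+1) y : 'rV[K]_n.+1 :=
  \row_i qf (As i) y.

Definition psi_single_point (As : 'I_n.+1 -> 'M[K]_m.+1) p q :=
  exists v : 'rV[K]_n.+1, v != 0 /\
    (exists y, on_line p q y /\ psi_defined As y) /\
    (forall y, on_line p q y -> psi_defined As y -> proj_eq v (psi_vec As y)).

Definition line_in_cayley (As : 'I_n.+1 -> 'M[K]_m.+1) p q :=
  forall y, on_line p q y -> in_cayley As y.

(* secant: through two distinct points of C, or tangent to C at a point y,
   i.e. y in C and l contained in the Zariski tangent space of C at y *)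
Definition secant_line (As : 'I_n.+1 -> 'M[K]_m.+1) p q :=
  (exists y z, [/\ on_line p q y, on_line p q z, in_cayley As y, in_cayley As z
               & ~ proj_eq y z])
  \/ (exists y, [/\ on_line p q y, in_cayley As y &
        forall z, on_line p q z -> forall i, bf (As i) y z = 0]).

End Cayley.

From HB Require Import structures.
From mathcomp Require Import all_boot all_order all_algebra.
From mathcomp Require Import ring.
From Stdlib Require Import Classical.
Set Implicit Arguments. Unset Strict Implicit. Unset Printing Implicit Defensive.
Import GRing.Theory.
Local Open Scope ring_scope.

(* On the line l each y^T A_i y is a binary quadratic form.  If l meets C in
   two distinct points y, z, then on a y + b z all these forms equal
   2ab y^T A_i z; if l is tangent to C at y, they equal b^2 z^T A_i z for any
   other point z of l.  Either way psi is constant on l.  Conversely, if psi(l)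
   is the point v with v_j <> 0, every form is v_i/v_j times the j-th one on l,
   and by polarization (char <> 2) so is every bilinear form.  Hence C meets l
   in the zeros of y^T A_j y, which exist since K is algebraically closed: a
   simple zero y yields a second zero, a double zero makes l tangent at y. *)

Section SymmetricForm.
Variables (K : fieldType) (m : nat) (A : 'M[K]_m.+1).
Implicit Types (y z w : 'rV[K]_m.+1).

Lemma bfDl y z w : bf A (y + z) w = bf A y w + bf A z w.
Proof. by rewrite /bf !mulmxDl mxE. Qed.

Lemma bfZl a y w : bf A (a *: y) w = a * bf A y w.
Proof. by rewrite /bf -!scalemxAl mxE. Qed.

Lemma bfDr y z w : bf A w (y + z) = bf A w y + bf A w z.
Proof. by rewrite /bf linearD mulmxDr mxE. Qed.

Lemma bfZr a y w : bf A w (a *: y) = a * bf A w y.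
Proof. by rewrite /bf linearZ -scalemxAr mxE. Qed.

Lemma bf0r y : bf A y 0 = 0.
Proof. by rewrite /bf trmx0 mulmx0 mxE. Qed.

Lemma qf0 : qf A 0 = 0.
Proof. exact: bf0r. Qed.

Hypothesis symA : A^T = A.

Lemma bfC y z : bf A y z = bf A z y.
Proof.
rewrite /bf.
have -> : y *m A *m z^T = (z *m A *m y^T)^T by rewrite !trmx_mul trmxK symA mulmxA.
by rewrite mxE.
Qed.

Lemma qf_lincomb a b y z :
  qf A (a *: y + b *: z) =
  a ^+ 2 * qf A y + 2%:R * a * b * bf A y z + b ^+ 2 * qf A z.
Proof. by rewrite /qf -!/(bf _ _ _) !(bfDl, bfDr, bfZl, bfZr) (bfC z y); ring. Qed.

Lemma bf_polarization y z : 2%:R * bf A y z = qf A (y + z) - qf A y - qf A z.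
Proof. by have := qf_lincomb 1 1 y z; rewrite !scale1r => ->; ring. Qed.

Lemma qf_second_root y w : qf A y = 0 ->
  let z := qf A w *: y - (2%:R * bf A y w) *: w in
  qf A z = 0 /\ bf A y z = - (2%:R * bf A y w ^+ 2).
Proof.
move=> Qy z; rewrite /z -scaleNr qf_lincomb bfDr !bfZr -[bf A y y]/(qf A y) Qy.
by split; ring.
Qed.

End SymmetricForm.

Lemma lincomb_cramer (K : fieldType) (V : lmodType K) (p q : V) s1 t1 s2 t2 s t :
  s1 * t2 - s2 * t1 != 0 ->
  exists a b, s *: p + t *: q = a *: (s1 *: p + t1 *: q) + b *: (s2 *: p + t2 *: q).
Proof.
move=> det_neq0; exists ((s * t2 - t * s2) / (s1 * t2 - s2 * t1)).
exists ((s1 * t - t1 * s) / (s1 * t2 - s2 * t1)).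
rewrite !scalerDr !scalerA addrACA -!scalerDl.
by congr (_ *: _ + _ *: _); field.
Qed.

Lemma proj_eq_of_det0 (K : fieldType) N (p q : 'rV[K]_N) s1 t1 s2 t2 :
  s1 != 0 \/ t1 != 0 -> s2 *: p + t2 *: q != 0 -> s1 * t2 = s2 * t1 ->
  proj_eq (s1 *: p + t1 *: q) (s2 *: p + t2 *: q).
Proof.
move=> st1 + det0.
have [c [-> ->]] : exists c, s2 = c * s1 /\ t2 = c * t1.
  have [s1_0 | s1_neq0] := eqVneq s1 0.
    have t1_neq0 : t1 != 0 by case: st1 => //; rewrite s1_0 eqxx.
    exists (t2 / t1); split; last by field.
    by rewrite s1_0 mulr0; apply: (mulIf t1_neq0); rewrite -det0 s1_0 !mul0r.
  exists (s2 / s1); split; first by field.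
  by apply: (mulfI s1_neq0); rewrite det0; field.
move=> z_neq0; exists c; split; last by rewrite scalerDr !scalerA.
by apply: contraNneq z_neq0 => ->; rewrite !mul0r !scale0r addr0.
Qed.

Section Line.
Variables (K : fieldType) (m : nat) (p q : 'rV[K]_m.+1).

Definition line_space : {vspace 'rV[K]_m.+1} := (<[p]> + <[q]>)%VS.

Lemma line_spaceP y : reflect (exists s t, y = s *: p + t *: q) (y \in line_space).
Proof.
apply: (iffP memv_addP) => [[_ /vlineP[s ->] [_ /vlineP[t ->] ->]] | [s [t ->]]].
  by exists s, t.
by exists (s *: p); [exact/memvZ/memv_line | exists (t *: q); first exact/memvZ/memv_line].
Qed.

Lemma line_space_l : p \in line_space.
Proof. exact: subvP (addvSl _ _) _ (memv_line p). Qed.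

Lemma line_space_r : q \in line_space.
Proof. exact: subvP (addvSr _ _) _ (memv_line q). Qed.

Lemma on_line_param s1 t1 s2 t2 y z :
  y = s1 *: p + t1 *: q -> z = s2 *: p + t2 *: q -> s1 * t2 - s2 * t1 != 0 ->
  forall w, on_line p q w -> exists a b, w = a *: y + b *: z.
Proof. by move=> -> -> det_neq0 _ [s [t [_ ->]]]; apply: lincomb_cramer. Qed.

Lemma on_line_param_distinct y z :
  on_line p q y -> on_line p q z -> z != 0 -> ~ proj_eq y z ->
  forall w, on_line p q w -> exists a b, w = a *: y + b *: z.
Proof.
case=> s1 [t1 [st1 ey]] [s2 [t2 [_ ez]]] z_neq0 y_not_z.
apply: (on_line_param ey ez); rewrite subr_eq0; apply/eqP => det0.
by apply: y_not_z; rewrite ey ez; apply: proj_eq_of_det0; rewrite -?ez.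
Qed.

Lemma on_line_param_from y : on_line p q y ->
  exists2 z, on_line p q z & forall w, on_line p q w -> exists a b, w = a *: y + b *: z.
Proof.
case=> s [t [st ey]].
have eq_p : p = 1 *: p + 0 *: q by rewrite scale1r scale0r addr0.
have eq_q : q = 0 *: p + 1 *: q by rewrite scale1r scale0r add0r.
have [s0 | s_neq0] := eqVneq s 0.
- have t_neq0 : t != 0 by case: st => //; rewrite s0 eqxx.
  exists p; first by exists 1, 0; split; [left; exact: oner_neq0 | exact: eq_p].
  by apply: (on_line_param ey eq_p); rewrite s0 mulr0 mul1r sub0r oppr_eq0.
- exists q; first by exists 0, 1; split; [right; exact: oner_neq0 | exact: eq_q].
  by apply: (on_line_param ey eq_q); rewrite mulr1 mul0r subr0.
Qed.

Hypothesis hl : is_line p q.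

Lemma is_line_lincomb_eq0 s t : s *: p + t *: q = 0 -> s = 0 /\ t = 0.
Proof.
move=> st0; have : row_mx (s%:M : 'M_1) t%:M *m col_mx p q = 0 *m col_mx p q.
  by rewrite mul_row_col !mul_scalar_mx st0 mul0mx.
move/(row_free_inj hl)/eqP; rewrite row_mx_eq0 => /andP[/eqP s0 /eqP t0].
by split; [move: s0 | move: t0] => /matrixP/(_ 0 0); rewrite !mxE.
Qed.

Lemma on_lineE y : on_line p q y <-> y != 0 /\ y \in line_space.
Proof.
split=> [[s [t [st ->]]] | [y_neq0 /line_spaceP [s [t ey]]]].
  split; last by apply/line_spaceP; exists s, t.
  by apply/eqP => /is_line_lincomb_eq0 [s0 t0]; case: st => /eqP.
exists s, t; split=> //; apply/orP; apply: contraNT y_neq0.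
by rewrite negb_or ey => /andP[/negPn/eqP -> /negPn/eqP ->]; rewrite !scale0r addr0.
Qed.

End Line.

Section SinglePoint.
Variables (K : fieldType) (m n : nat) (As : 'I_n.+1 -> 'M[K]_m.+1).
Variables (p q : 'rV[K]_m.+1).

Lemma psi_definedP y : psi_defined As y <-> psi_vec As y != 0.
Proof.
split=> [[i Qi] | /matrix0Pn [i0 [i]]]; last by rewrite mxE; exists i.
by apply/matrix0Pn; exists 0, i; rewrite mxE.
Qed.

Lemma psi_vec_scaleE y c v : psi_vec As y = c *: v -> forall i, qf (As i) y = c * v 0 i.
Proof. by move=> /matrixP psi_cv i; have := psi_cv 0 i; rewrite !mxE. Qed.

Hypothesis hl : is_line p q.

Lemma exists_psi_defined :
  ~ line_in_cayley As p q -> exists2 y, on_line p q y & psi_defined As y.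
Proof.
move=> not_in_C; apply: NNPP => all_undef; apply: not_in_C => y y_line.
split=> [|i]; first by case/(on_lineE hl): y_line.
by apply/eqP/negPn/negP => Qi; apply: all_undef; exists y => //; exists i.
Qed.

Lemma psi_single_point_of_param y z v :
  (forall w, on_line p q w -> exists a b, w = a *: y + b *: z) ->
  (forall a b, exists c, psi_vec As (a *: y + b *: z) = c *: v) ->
  ~ line_in_cayley As p q -> psi_single_point As p q.
Proof.
move=> param psi_v /exists_psi_defined [w0 w0_line w0_def].
have psi_line w : on_line p q w -> exists c, psi_vec As w = c *: v.
  by case/param=> a [b ->].
exists v; split; last split.
- have [c psi_cv] := psi_line w0 w0_line.
  by move/psi_definedP: w0_def; rewrite psi_cv; apply: contraNneq => ->; rewrite scaler0.
- by exists w0.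
- move=> w /psi_line [c psi_cv] /psi_definedP; rewrite psi_cv => cv_neq0.
  by exists c; split=> //; apply: contraNneq cv_neq0 => ->; rewrite scale0r.
Qed.

Hypothesis symAs : forall i, (As i)^T = As i.

Lemma secant_psi_single_point :
  secant_line As p q -> ~ line_in_cayley As p q -> psi_single_point As p q.
Proof.
move=> [[y [z [y_line z_line [_ Qy] [z_neq0 Qz] y_not_z]]] | [y [y_line [_ Qy] tangent]]].
- apply: (psi_single_point_of_param (v := \row_i bf (As i) y z)).
    exact: on_line_param_distinct y_line z_line z_neq0 y_not_z.
  move=> a b; exists (2%:R * a * b); apply/rowP => i.
  by rewrite !mxE qf_lincomb // Qy Qz; ring.
- have [z z_line param] := on_line_param_from y_line.
  apply: (psi_single_point_of_param (v := psi_vec As z) param) => a b.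
  exists (b ^+ 2); apply/rowP => i.
  by rewrite !mxE qf_lincomb // Qy tangent //; ring.
Qed.

End SinglePoint.

Lemma binary_quadratic_root (K : closedFieldType) (a b c : K) :
  exists s t, (s != 0 \/ t != 0) /\ a * s ^+ 2 + b * s * t + c * t ^+ 2 = 0.
Proof.
have [-> | a_neq0] := eqVneq a 0.
  by exists 1, 0; split; [left; exact: oner_neq0 | ring].
have [x] := @solve_monicpoly K 2 (fun i => if i == 0%N then - c / a else - b / a) isT.
rewrite !big_ord_recr big_ord0 /= expr0 expr1 mulr1 add0r => x2.
exists x, 1; split; first by right; exact: oner_neq0.
by rewrite x2; field.
Qed.

Section Converse.
Variables (K : closedFieldType) (m n : nat) (As : 'I_n.+1 -> 'M[K]_m.+1).
Variables (p q : 'rV[K]_m.+1).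
Hypothesis symAs : forall i, (As i)^T = As i.
Hypothesis two_neq0 : (2%:R : K) != 0.
Hypothesis hl : is_line p q.

Lemma qf_line_root (A : 'M[K]_m.+1) : A^T = A -> exists2 y, on_line p q y & qf A y = 0.
Proof.
move=> symA; have [s [t [st Q0]]] := binary_quadratic_root (qf A p) (2%:R * bf A p q) (qf A q).
exists (s *: p + t *: q); first by exists s, t.
by rewrite qf_lincomb // -Q0; ring.
Qed.

Section ProportionalForms.
Variables (v : 'rV[K]_n.+1) (j : 'I_n.+1).
Hypothesis vj_neq0 : v 0 j != 0.
Hypothesis psi_v : forall y, on_line p q y -> psi_defined As y -> proj_eq v (psi_vec As y).

Lemma qf_proportional i w :
  w \in line_space p q -> qf (As i) w * v 0 j = v 0 i * qf (As j) w.
Proof.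
move=> w_sp; have [c /psi_vec_scaleE psi_cv] : exists c, psi_vec As w = c *: v.
  have [psi0 | /psi_definedP w_def] := eqVneq (psi_vec As w) 0.
    by exists 0; rewrite scale0r.
  have w_line : on_line p q w.
    apply/(on_lineE hl); split=> //.
    by case: (w_def) => k; apply: contraNneq => ->; rewrite qf0.
  by have [c [_ ->]] := psi_v w_line w_def; exists c.
by rewrite !psi_cv mulrAC mulrC.
Qed.

Lemma bf_proportional i y z : y \in line_space p q -> z \in line_space p q ->
  bf (As i) y z * v 0 j = v 0 i * bf (As j) y z.
Proof.
move=> y_sp z_sp; apply: (mulfI two_neq0).
rewrite mulrA mulrCA !bf_polarization // !mulrBl !mulrBr.
by rewrite !(qf_proportional i) //; apply: memvD.
Qed.

Lemma in_cayley_of_qf_eq0 y : on_line p q y -> qf (As j) y = 0 -> in_cayley As y.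
Proof.
move=> /(on_lineE hl) [y_neq0 y_sp] Qy; split=> // i.
by apply: (mulIf vj_neq0); rewrite qf_proportional // Qy mulr0 mul0r.
Qed.

Lemma secant_of_simple_root y w : on_line p q y -> qf (As j) y = 0 ->
  w \in line_space p q -> bf (As j) y w != 0 -> secant_line As p q.
Proof.
move=> y_line Qy w_sp Bw; have [Qz Byz] := qf_second_root (symAs j) w Qy.
set z := _ - _ in Qz Byz.
have Byz_neq0 : bf (As j) y z != 0 by rewrite Byz oppr_eq0 mulf_neq0 // expf_neq0.
have z_line : on_line p q z.
  apply/(on_lineE hl); split.
    by apply: contraNneq Byz_neq0 => ->; rewrite bf0r.
  by rewrite memvB ?memvZ //; case/(on_lineE hl): y_line.
left; exists y, z; split=> //; try exact: in_cayley_of_qf_eq0.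
by case=> c [_ zc]; move: Byz_neq0; rewrite zc bfZr -[bf _ y y]/(qf _ y) Qy mulr0 eqxx.
Qed.

Lemma tangent_of_double_root y : on_line p q y -> qf (As j) y = 0 ->
  bf (As j) y p = 0 -> bf (As j) y q = 0 -> secant_line As p q.
Proof.
move=> y_line Qy Byp Byq; right; exists y; split=> //; first exact: in_cayley_of_qf_eq0.
have y_sp : y \in line_space p q by case/(on_lineE hl): y_line.
have Bi0 i w : w \in line_space p q -> bf (As j) y w = 0 -> bf (As i) y w = 0.
  by move=> w_sp Bw; apply: (mulIf vj_neq0); rewrite bf_proportional // Bw !mulr0 mul0r.
move=> _ [s [t [_ ->]]] i.
rewrite bfDr !bfZr (Bi0 i p) ?line_space_l // (Bi0 i q) ?line_space_r //.
by rewrite !mulr0 addr0.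
Qed.

End ProportionalForms.

Lemma psi_single_point_secant : psi_single_point As p q -> secant_line As p q.
Proof.
case=> v [/matrix0Pn [i0 [j vj_neq0]] [_ psi_v]]; rewrite [i0]ord1 in vj_neq0.
have [y y_line Qy] := qf_line_root (symAs j).
have simple_root := secant_of_simple_root vj_neq0 psi_v y_line Qy.
have [Byp | Byp_neq0] := eqVneq (bf (As j) y p) 0; last first.
  by apply: simple_root Byp_neq0; apply: line_space_l.
have [Byq | Byq_neq0] := eqVneq (bf (As j) y q) 0; last first.
  by apply: simple_root Byq_neq0; apply: line_space_r.
exact: (tangent_of_double_root vj_neq0 psi_v y_line Qy Byp Byq).
Qed.

End Converse.

Unset Implicit Arguments.

Theorem lemma5p1p1 (k : fieldType) (K : closedFieldType) (f : {rmorphism k -> K})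
    (m n : nat) (As : 'I_n.+1 -> 'M[k]_m.+1)
    (h2 : (2%:R : k) != 0) (h3 : (3%:R : k) != 0)
    (hsym : forall i, (As i)^T = As i)
    (p q : 'rV[K]_m.+1) (hl : is_line p q) :
  let AK := fun i => map_mx f (As i) in
  (secant_line AK p q -> ~ line_in_cayley AK p q -> psi_single_point AK p q) /\
  (psi_single_point AK p q -> secant_line AK p q).
Proof.
move=> AK.
have symAK i : (AK i)^T = AK i by rewrite map_trmx hsym.
have two_neq0 : (2%:R : K) != 0 by rewrite -(rmorph_nat f) fmorph_eq0.
split; [exact: secant_psi_single_point | exact: psi_single_point_secant].
Qed.
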